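(* Let $G$ be a finite group and let $C\subset G$ be an abundant conjugacy class. Then for every positive integer $n$ divisible by $|G|^2$, there exists $s\in G\backslash\operatorname{Sur}^C_1(F_n,G)$ such that the image in $S_n$ of the stabilizer of $s$ in $B_n$ contains an $n$-cycle.
   Context: A conjugacy class $C$ of $G$ is abundant if for some (equivalently every) $x\in C$ there is $y\in G$ such that $\{y^{-r}xy^r:r\in\mathbb Z\}$ generates $G$. $\operatorname{Sur}^C_1(F_n,G)$ is the set of $(g_1,\dots,g_n)\in C^n$ with $\langle g_1,\dots,g_n\rangle=G$ and $g_1\cdots g_n=1$; $G\backslash\operatorname{Sur}^C_1(F_n,G)$ is its set of orbits under simultaneous conjugation $(g_i)\mapsto(gg_ig^{-1})$. $B_n$ acts on it from the right via $(\dots,g_i,g_{i+1},\dots)^{\sigma_i}=(\dots,g_{i+1},g_{i+1}^{-1}g_ig_{i+1},\dots)$ (this commutes with conjugation), and $B_n\to S_n$ sends $\sigma_i\mapsto(i\ i+1)$. *)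

From mathcomp Require Import all_boot all_fingroup.
Set Implicit Arguments. Unset Strict Implicit. Unset Printing Implicit Defensive.
Local Open Scope group_scope.

(* Braid generator sigma_i (0-indexed i : 'I_n.-1) acts on positions i, i+1 of 'I_n. *)
Lemma ord_pred_lt n (i : 'I_n.-1) : (i < n)%N.
Proof. case: n i => [|n] [i /= hi] //. exact: (leq_trans hi (leqnSn n)). Qed.

Lemma ord_pred_ltS n (i : 'I_n.-1) : (i.+1 < n)%N.
Proof. by case: n i => [|n] [i /= hi]. Qed.

Definition posL n (i : 'I_n.-1) : 'I_n := Ordinal (ord_pred_lt i).
Definition posR n (i : 'I_n.-1) : 'I_n := Ordinal (ord_pred_ltS i).

(* A braid word: letters (i, true) = sigma_i, (i, false) = sigma_i^{-1}. *)
Definition braid_word n := seq ('I_n.-1 * bool).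

Section Braid.
Variable gT : finGroupType.

(* Right action of sigma_i^{+-1} on n-tuples:
   sigma_i   : (.., a, c, ..) |-> (.., c, c^-1 a c, ..)
   sigma_i^-1: (.., a, c, ..) |-> (.., a c a^-1, a, ..)
   (In MathComp x ^ y = y^-1 * x * y.) *)
Definition braid_gen n (l : 'I_n.-1 * bool) (g : {ffun 'I_n -> gT}) :
    {ffun 'I_n -> gT} :=
  let a := g (posL l.1) in let c := g (posR l.1) in
  [ffun j => if j == posL l.1 then (if l.2 then c else c ^ a^-1)
             else if j == posR l.1 then (if l.2 then a ^ c else a)
             else g j].

Definition braid_act n (w : braid_word n) (g : {ffun 'I_n -> gT}) :=
  foldl (fun h l => braid_gen l h) g w.

Definition conj_tuple n (h : gT) (g : {ffun 'I_n -> gT}) : {ffun 'I_n -> gT} :=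
  [ffun i => g i ^ h].

Definition SurC1 (C : {set gT}) n (g : {ffun 'I_n -> gT}) : Prop :=
  [/\ forall i, g i \in C,
      <<[set g i | i : 'I_n]>> = [set: gT] &
      \prod_(i < n) g i = 1].

(* Abundant conjugacy class: {y^-r x y^r : r in Z} = x ^: <[y]>. *)
Definition abundant (C : {set gT}) : Prop :=
  exists2 x, x \in C & exists y : gT, <<x ^: <[y]> >> = [set: gT].
End Braid.

Definition braid_perm n (w : braid_word n) : {perm 'I_n} :=
  \prod_(l <- w) tperm (posL l.1) (posR l.1).

Definition is_ncycle n (p : {perm 'I_n}) : Prop :=
  exists x : 'I_n, porbit p x = [set: 'I_n].

From mathcomp Require Import all_boot all_fingroup.
From mathcomp Require Import cyclic.
Local Open Scope group_scope.

(* Pick x in C and y with <<x ^: <[y]> >> = G, and take the tuple g_i = x^(y^i)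
   for i < n. Since |G| divides n, y^n = 1: the g_i run over all of x ^: <[y]>,
   and their product (x y^-1)^n y^n is 1. The braid sigma_1 ... sigma_(n-1) maps
   (g_1, ..., g_n) to (g_2, ..., g_n, g_1^(g_2 ... g_n)), and g_1^(g_2 ... g_n) = g_1
   because the full product is 1; so it shifts the tuple cyclically, which for
   our tuple is conjugation by y, while its image in S_n is an n-cycle. *)

Section ConjPowers.
Context {gT : finGroupType}.

Lemma expg_dvd_card (z : gT) n : (#|gT| %| n)%N -> z ^+ n = 1.
Proof.
move=> dvd_n; apply/eqP; rewrite -order_dvdn; apply: dvdn_trans dvd_n.
by rewrite -cardsT order_dvdG ?inE.
Qed.

Lemma prod_conj_expg (x y : gT) k :
  \prod_(i < k) x ^ (y ^+ i) = (x * y^-1) ^+ k * y ^+ k.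
Proof.
elim: k => [|k IHk]; first by rewrite big_ord0 !expg0 mulg1.
rewrite big_ord_recr /= IHk conjgE !expgSr -expgVn expgVn !mulgA mulgK.
by rewrite -(mulgA _ (y ^+ k) y) -expgSr expgS mulgA mulgKV.
Qed.

Definition conj_powers n (x y : gT) : {ffun 'I_n -> gT} :=
  [ffun i : 'I_n => x ^ (y ^+ i)].

Lemma conj_powers_SurC1 (C : {set gT}) x y n :
  C \in classes [set: gT] -> x \in C -> <<x ^: <[y]> >> = [set: gT] ->
  (0 < n)%N -> (#|gT| %| n)%N -> SurC1 C (conj_powers n x y).
Proof.
move=> /imsetP[x0 _ ->] /imsetP[z _ ->] gen_xy n_gt0 dvd_n.
have yn1 : y ^+ n = 1 by apply: expg_dvd_card.
split.
- by move=> i; rewrite ffunE -conjgM memJ_class ?inE.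
- apply/eqP; rewrite eqEsubset subsetT -gen_xy genS //.
  apply/subsetP => _ /imsetP[_ /cycleP[k ->] ->].
  have lt_k_n : (k %% #[y] < n)%N.
    by rewrite (leq_trans (ltn_pmod _ (order_gt0 y))) // dvdn_leq // order_dvdn yn1.
  by apply/imsetP; exists (Ordinal lt_k_n); rewrite // ffunE /= expg_mod_order.
- by under eq_bigr do rewrite ffunE; rewrite prod_conj_expg !expg_dvd_card ?mulg1.
Qed.

Lemma conj_tuple_conj_powers n (x y : gT) : y ^+ n.+1 = 1 ->
  conj_tuple y (conj_powers n.+1 x y) = [ffun j => conj_powers n.+1 x y (ordS j)].
Proof.
move=> yn1; apply/ffunP => j; rewrite !ffunE -conjgM -expgSr.
by rewrite (expg_mod _ yn1).
Qed.

End ConjPowers.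

Lemma val_tperm n (a b z : 'I_n) :
  val (tperm a b z) = if z == a then val b else if z == b then val a else val z.
Proof.
case: eqP => [->|ne_z_a]; first by rewrite tpermL.
case: eqP => [->|ne_z_b]; first by rewrite tpermR.
by rewrite tpermD //; apply/eqP => e; [apply: ne_z_a | apply: ne_z_b].
Qed.

Section RotationBraid.
Variable m : nat.

Definition rot_word k : braid_word m.+2 :=
  [seq (inord i, true) | i <- iota 0 k].

Lemma rot_wordS k : rot_word k.+1 = rcons (rot_word k) (inord k, true).
Proof. by rewrite /rot_word -[k.+1]addn1 iotaD map_cat cats1. Qed.

Lemma braid_act_rot_word (gT : finGroupType) (f : nat -> gT) k : (k <= m.+1)%N ->
  braid_act (rot_word k) [ffun j : 'I_m.+2 => f j] =
  [ffun j : 'I_m.+2 => if (j < k)%N then f j.+1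
     else if j == k :> nat then f 0%N ^ (\prod_(1 <= i < k.+1) f i) else f j].
Proof.
elim: k => [|k IHk] le_k_m.
  by apply/ffunP => j; rewrite !ffunE /= big_geq // conjg1; case: eqP => // ->.
rewrite rot_wordS /braid_act foldl_rcons -/(braid_act _ _) IHk ?(ltnW le_k_m) //.
have val_k : (@inord m k : nat) = k by rewrite inordK.
apply/ffunP => j; rewrite /braid_gen !ffunE /=.
have -> : (j == @posL m.+2 (inord k)) = (j == k :> nat) by rewrite -val_eqE /= val_k.
have -> : (j == @posR m.+2 (inord k)) = (j == k.+1 :> nat) by rewrite -val_eqE /= val_k.
rewrite ?ffunE /= val_k ltnn eqxx (gtn_eqF (ltnSn k)) ltnNge leqnSn /=.
case: eqP => [->|ne_j_k]; first by rewrite ltnSn.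
case: eqP => [->|_]; first by rewrite ltnn [in RHS]big_nat_recr //= conjgM.
case: (ltngtP j k) ne_j_k => // [lt_j_k | lt_k_j] _.
  by rewrite ltnS ltnW.
by rewrite ltnS leqNgt lt_k_j.
Qed.

Lemma braid_act_rot_word_prod1 (gT : finGroupType) (g : {ffun 'I_m.+2 -> gT}) :
  \prod_i g i = 1 -> braid_act (rot_word m.+1) g = [ffun j => g (ordS j)].
Proof.
move=> prod_g; pose f i := g (inord i).
have g_f : g = [ffun j : 'I_m.+2 => f j] by apply/ffunP => j; rewrite ffunE /f inord_val.
rewrite [in LHS]g_f braid_act_rot_word //; apply/ffunP => j; rewrite !ffunE /f.
case: ifP => [lt_j_m | /negbT].
  by congr (g _); apply: val_inj; rewrite /= inordK // modn_small.
rewrite -leqNgt => le_m_j.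
have val_j : j = m.+1 :> nat by apply/eqP; rewrite eqn_leq le_m_j -ltnS ltn_ord.
have prod_f : \prod_(0 <= i < m.+2) g (inord i) = 1.
  by rewrite big_mkord -[RHS]prod_g; apply: eq_bigr => i _; rewrite inord_val.
have rest_g : \prod_(1 <= i < m.+2) g (inord i) = (g (inord 0))^-1.
  by apply: (mulgI (g (inord 0))); rewrite mulgV -[RHS]prod_f [RHS]big_ltn.
rewrite val_j eqxx rest_g conjgE invgK mulgV mulg1; congr (g _); apply: val_inj.
by rewrite /= val_j modnn inordK.
Qed.

Lemma braid_perm_rot_word k (z : 'I_m.+2) : (k <= m.+1)%N ->
  val (braid_perm (rot_word k) z) =
  if val z == 0%N then k else if (val z <= k)%N then (val z).-1 else val z.
Proof.
elim: k => [|k IHk] le_k_m.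
  by rewrite /braid_perm big_nil perm1; case: eqP => // /eqP; rewrite leqn0 => /negbTE ->.
have val_k : (@inord m k : nat) = k by rewrite inordK.
rewrite rot_wordS /braid_perm big_rcons -/(braid_perm _) permM val_tperm.
rewrite -!val_eqE /= val_k IHk ?(ltnW le_k_m) //.
change (val z) with (nat_of_ord z); case: (nat_of_ord z) => [|v] /=; first by rewrite eqxx.
rewrite !ltnS; case: (ltngtP v k) => [lt_v_k | lt_k_v | ->].
- by rewrite (ltn_eqF lt_v_k) (ltn_eqF (leqW lt_v_k)).
- by rewrite (gtn_eqF (ltnW lt_k_v : k < v.+1)) eqSS (gtn_eqF lt_k_v).
- by rewrite eqSS (gtn_eqF (ltnSn k)) eqxx.
Qed.

Lemma is_ncycle_rot_word : is_ncycle (braid_perm (rot_word m.+1)).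
Proof.
set p := braid_perm _.
have val_pX k : (k <= m.+1)%N -> val ((p ^+ k)%g ord_max) = (m.+1 - k)%N.
  elim: k => [|k IHk] le_k_m; first by rewrite expg0 perm1 subn0.
  rewrite expgSr permM braid_perm_rot_word // IHk ?(ltnW le_k_m) //.
  by rewrite subn_eq0 leqNgt le_k_m /= leq_subr subnS.
exists ord_max; apply/setP => j; rewrite inE; apply/porbitP.
exists (m.+1 - j)%N; apply: val_inj; rewrite val_pX ?leq_subr // subKn //.
by rewrite -ltnS.
Qed.

End RotationBraid.

Theorem proposition4p45 (gT : finGroupType) (C : {set gT}) :
  C \in classes [set: gT] -> abundant C ->
  forall n : nat, (0 < n)%N -> (#|gT| ^ 2 %| n)%N ->
  exists g : {ffun 'I_n -> gT},
    SurC1 C g /\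
    exists w : braid_word n,
      (exists h : gT, braid_act w g = conj_tuple h g) /\
      is_ncycle (braid_perm w).
Proof.
move=> C_class [x xC [y gen_xy]] n n_gt0 dvd_sq_n.
have dvd_n : (#|gT| %| n)%N by apply: dvdn_trans dvd_sq_n; rewrite expnS dvdn_mulr.
have sur_g : SurC1 C (conj_powers n x y) by apply: conj_powers_SurC1.
exists (conj_powers n x y); split => //.
case: n n_gt0 dvd_sq_n dvd_n sur_g => [//|[|m]] _ _ dvd_n [_ _ prod_g].
  exists [::]; split; first by exists 1; apply/ffunP => i; rewrite !ffunE conjg1.
  by exists ord0; apply/setP => i; rewrite inE (ord1 i) porbit_id.
exists (rot_word m m.+1); split; last exact: is_ncycle_rot_word.
exists y; rewrite conj_tuple_conj_powers ?expg_dvd_card //.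
exact: braid_act_rot_word_prod1.
Qed.
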